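(* Let $\mathcal G$ be a core network with input nodes $\iota_1,\dots,\iota_n$ and output node $o$, and let $B_j$ be an appendage homeostasis block of $\langle H\rangle$, with associated subnetwork $\mathcal K_j$. Then: (a) each node in $\mathcal K_j$ is an absolutely appendage node; (b) for every $m=1,\dots,n$ and every $\iota_mo$-simple path $S$, nodes in $\mathcal K_j$ are not $CS$-path equivalent to any node in $CS\setminus\mathcal K_j$; (c) $\mathcal K_j$ is a path component of $\mathcal A_{\mathcal G}$.
   Context: Node $b$ is downstream from $a$ (and $a$ upstream from $b$) if there is a directed path from $a$ to $b$ (every node is up/downstream from itself). A core network: every node is upstream from $o$ and downstream from at least one input node. A simple path visits each node at most once; an $\iota_mo$-simple path is a simple path from $\iota_m$ to $o$. A node is $\iota_m$-simple if it lies on an $\iota_mo$-simple path, and $\iota_m$-appendage if it is downstream from $\iota_m$ but not $\iota_m$-simple; it is absolutely appendage if it is $\iota_m$-appendage for every $m$. $\mathcal A_{\mathcal G}$ is the subnetwork of all absolutely appendage nodes with all arrows of $\mathcal G$ between them. For a subnetwork $\mathcal K$, nodes $a,b$ are $\mathcal K$-path equivalent if there are paths within $\mathcal K$ from $a$ to $b$ and from $b$ to $a$; a $\mathcal K$-path component is an equivalence class. For an $\iota_mo$-simple path $S$, $CS$ is the subnetwork of all nodes of $\mathcal G$ not on $S$ with all arrows of $\mathcal G$ between them. An admissible system has variables $x_j$ per node with $\dot x_{\iota_m}=f_{\iota_m}(X,\mathcal I)$, $\dot x_j=f_j(X)$ otherwise, $f_{j,x_\ell}=\partial f_j/\partial x_\ell\equiv0$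 unless there is an arrow $\ell\to j$ (all nodes self-coupled), $f_{\iota_m,\mathcal I}\neq0$; these entries are treated as independent indeterminates. $J_{\mathcal K}=(f_{j,x_\ell})_{j,\ell\in\mathcal K}$. $\langle H\rangle$ is the Jacobian over all nodes (output last) with last column replaced by $(-f_{\iota_m,\mathcal I}$ in row $\iota_m$, $0$ elsewhere$)$. By Frobenius–König theory, $P\langle H\rangle Q$ is block upper triangular with square fully indecomposable diagonal blocks (irreducible determinants) for suitable permutation matrices $P,Q$. A diagonal block of order $k$ containing no $f_{\iota_m,\mathcal I}$ and exactly $k$ self-coupling entries $f_{\ell,x_\ell}$ is an appendage homeostasis block; such a block, after permuting rows and columns, equals $J_{\mathcal K}$ for the set $\mathcal K$ of nodes indexing its rows, which is its associated subnetwork. *)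

From mathcomp Require Import all_boot.
From mathcomp Require Import boolp.
Set Implicit Arguments. Unset Strict Implicit. Unset Printing Implicit Defensive.

(* A network: nodes form a finite type T; [e l j] means there is an arrow l -> j.
   Inputs iota : 'I_n -> T (iota m is the node iota_{m+1}), output node o.
   All nodes are self-coupled (the Jacobian always has f_{j,x_j}). *)

Section Network.
Variables (T : finType) (e : rel T) (n : nat) (iota : 'I_n -> T) (o : T).

(* b is downstream from a (reflexive: every node is downstream from itself). *)
Definition downstream (a b : T) : bool := connect e a b.

Definition core_network : Prop :=
  forall x : T, downstream x o /\ exists m : 'I_n, downstream (iota m) x.

Definition simple_path (m : 'I_n) (s : seq T) : bool :=
  [&& path e (iota m) s, last (iota m) s == o & uniq (iota m :: s)].

Definition on_path (m : 'I_n) (s : seq T) (x : T) : bool := x \in iota m :: s.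

Definition simple_node (m : 'I_n) (x : T) : Prop :=
  exists s, simple_path m s /\ on_path m s x.

Definition appendage_node (m : 'I_n) (x : T) : Prop :=
  downstream (iota m) x /\ ~ simple_node m x.

Definition absolutely_appendage (x : T) : Prop :=
  forall m : 'I_n, appendage_node m x.

(* Subnetworks are given by their node sets, carrying all arrows of G between
   them.  Arrows of the subnetwork K: *)
Definition sub_rel (K : {set T}) : rel T :=
  [rel a b | [&& e a b, a \in K & b \in K]].

Definition path_equiv (K : {set T}) (a b : T) : Prop :=
  [/\ a \in K, b \in K, connect (sub_rel K) a b & connect (sub_rel K) b a].

Definition path_component (K P : {set T}) : Prop :=
  exists2 a, a \in K & P = [set b | `[< path_equiv K a b >]].

Definition AG : {set T} := [set x | `[< absolutely_appendage x >]].

Definition CS (m : 'I_n) (s : seq T) : {set T} := [set x | x \notin iota m :: s].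

(* Entries of <H>, as the independent indeterminates they are: *)
Inductive entry :=
| EZero
| Ef of T & T                 (* f_{j, x_l}  *)
| EI of 'I_n.                 (* - f_{iota_m, I} *)

Definition nonzero (a : entry) : bool := if a is EZero then false else true.
Definition is_input_entry (a : entry) : bool := if a is EI _ then true else false.
Definition is_self_entry (a : entry) : bool :=
  if a is Ef j l then j == l else false.

(* <H>: rows and columns indexed by nodes; the column of the output node o is
   replaced by (-f_{iota_m,I} in row iota_m, 0 elsewhere). *)
Definition hH (j l : T) : entry :=
  if l == o then
    (if [pick m | iota m == j] is Some m then EI m else EZero)
  else if (j == l) || e l j then Ef j l else EZero.

(* A square submatrix of <H> given by its row set R and column set C
   (the order of rows/columns inside the block is irrelevant below). *)
Definition fully_indecomposable (R C : {set T}) : Prop :=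
  [/\ #|R| = #|C|, 0 < #|R|,
      #|R| = 1 -> exists r c, [/\ r \in R, c \in C & nonzero (hH r c)]
    & forall R' C' : {set T}, R' \subset R -> C' \subset C ->
        0 < #|R'| < #|R| -> #|R'| + #|C'| = #|R| ->
        exists r c, [/\ r \in R', c \in C' & nonzero (hH r c)]].

(* Frobenius--Koenig form: permutations P, Q such that P<H>Q is block upper
   triangular with square fully indecomposable diagonal blocks.  Equivalently
   (and this is what the permutations literally produce), an ordered list of
   diagonal blocks (R_i, C_i), the R_i partitioning the rows and the C_i the
   columns, with the blocks below the diagonal (rows of R_i, columns of C_l,
   l < i) identically zero. *)
Definition FK_decomposition (bs : seq ({set T} * {set T})) : Prop :=
  [/\ forall r : T, count (fun b : {set T} * {set T} => r \in b.1) bs = 1,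
      forall c : T, count (fun b : {set T} * {set T} => c \in b.2) bs = 1,
      forall b, b \in bs -> fully_indecomposable b.1 b.2
    & forall i l, l < i < size bs ->
        forall r c, r \in (nth (set0, set0) bs i).1 ->
                    c \in (nth (set0, set0) bs l).2 -> hH r c = EZero].

Definition appendage_block (R C : {set T}) : Prop :=
  (forall r c, r \in R -> c \in C -> ~~ is_input_entry (hH r c)) /\
  #|[set p : T * T | [&& p.1 \in R, p.2 \in C & is_self_entry (hH p.1 p.2)]]|
    = #|R|.

Definition assoc_subnetwork (B : {set T} * {set T}) : {set T} := B.1.

End Network.

From Pilot Require Import Defs.
From mathcomp Require Import all_boot.
From mathcomp Require Import boolp zify.
Set Implicit Arguments. Unset Strict Implicit. Unset Printing Implicit Defensive.

(* Call a permutation sg of the nodes a transversal of <H> if every entry <H>(sg c, c)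
   is nonzero.  As <H> is block upper triangular with square diagonal blocks, comparing
   the sums of the row and column block indices shows that a transversal maps the columns
   of each diagonal block onto its rows.  An appendage block has as many self-couplings
   f_{l,x_l} as rows, so its row and column sets are one node set K not containing o;
   hence K is invariant under every transversal.  A simple path from iota_m to o, closed
   up by the entry -f_{iota_m,I} of column o, together with any cycle disjoint from it
   and the diagonal elsewhere, is a transversal.  So K-membership is constant along simple
   paths, which contain o, and along cycles avoiding some simple path: this gives (b),
   the non-simplicity part of (a) and one inclusion of (c).  Full indecomposability makes
   K strongly connected, the other inclusion.  Finally, a node of K not downstream from
   iota_m must reach back into every simple path leading to it from another input, and
   the node it reaches is again in K; descending along shorter and shorter prefixes ends
   at an input node in K, which is impossible. *)

Lemma count1_nth_uniq (X : Type) (a : pred X) (s : seq X) x0 i j :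
  count a s = 1 -> i < j < size s -> a (nth x0 s i) -> ~~ a (nth x0 s j).
Proof.
move=> a1 /andP[lt_ij lt_js] ai; apply/negP => aj.
have : has a (take j s).
  by apply/(has_nthP x0); exists i; rewrite ?size_take ?lt_js ?nth_take.
move: a1; rewrite -[in count a s](cat_take_drop j s) count_cat (drop_nth x0 lt_js) /= aj.
by rewrite has_count; lia.
Qed.

Lemma eq_leq_sum (I : finType) (E1 E2 : I -> nat) :
  (forall i, E1 i <= E2 i) -> \sum_i E1 i = \sum_i E2 i -> forall i, E1 i = E2 i.
Proof.
move=> le12 eq12 i.
have := @leqif_sum I xpredT (fun i => E1 i == E2 i) E1 E2 (fun i _ => leqif_eq (le12 i)).
by move/eq_leqif; rewrite eq12 eqxx => /esym/forall_inP/(_ i isT)/eqP.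
Qed.

Section PartitionIndex.
Variables (T : finType) (S : seq {set T}).
Hypothesis S_partition : forall x, count (fun A : {set T} => x \in A) S = 1.

Definition part_index (x : T) : nat := find (fun A : {set T} => x \in A) S.

Lemma part_index_lt x : part_index x < size S.
Proof. by rewrite -has_find has_count S_partition. Qed.

Lemma mem_part_index x : x \in nth set0 S (part_index x).
Proof. by apply: (nth_find _ (a := fun A : {set T} => x \in A)); rewrite has_count S_partition. Qed.

Lemma part_indexP x i : i < size S -> x \in nth set0 S i -> part_index x = i.
Proof.
move=> lt_iS xi; case: (ltngtP (part_index x) i) => // [lt_xi | lt_ix].
  have /(_ i) := count1_nth_uniq (S_partition x) _ (mem_part_index x).
  by rewrite lt_xi lt_iS xi => /(_ isT).
by move: xi; rewrite (before_find _ lt_ix).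
Qed.

Lemma part_indexE x i : i < size S -> (part_index x == i) = (x \in nth set0 S i).
Proof. by move=> lt_iS; apply/eqP/idP => [<-|]; [apply: mem_part_index | apply: part_indexP]. Qed.

Lemma sum_part_index : \sum_x part_index x = \sum_(i < size S) #|nth set0 S i| * i.
Proof.
under [RHS]eq_bigr do rewrite -sum_nat_const big_mkcond /=.
rewrite exchange_big /=; apply: eq_bigr => x _.
rewrite (bigD1 (Ordinal (part_index_lt x))) //= mem_part_index big1 ?addn0 // => i.
by case: ifP => // xi; rewrite -val_eqE /= (part_indexP (ltn_ord i) xi) eqxx.
Qed.

End PartitionIndex.

Lemma part_index_map (X : eqType) (T : finType) (bs : seq X) (pr : X -> {set T}) b x :
    b \in bs -> (forall y, count (fun A : {set T} => y \in A) (map pr bs) = 1) ->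
  (part_index (map pr bs) x == index b bs) = (x \in pr b).
Proof.
move=> b_in pr_partition; rewrite part_indexE ?size_map ?index_mem //.
by rewrite (nth_map b) ?index_mem // nth_index.
Qed.

Section BlockTriangular.
Variables (T : finType) (rows cols : seq {set T}) (nz : rel T).
Hypotheses (rows_partition : forall x, count (fun A : {set T} => x \in A) rows = 1)
           (cols_partition : forall x, count (fun A : {set T} => x \in A) cols = 1)
           (size_rows_cols : size rows = size cols)
           (card_rows_cols : forall i, i < size rows -> #|nth set0 rows i| = #|nth set0 cols i|)
           (nz_upper : forall r c, nz r c -> part_index rows r <= part_index cols c).

Lemma transversal_part_index (sg : T -> T) : injective sg -> (forall c, nz (sg c) c) ->
  forall c, part_index rows (sg c) = part_index cols c.
Proof.
move=> sg_inj nz_sg; apply: eq_leq_sum => [c|]; first exact: nz_upper.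
have -> : \sum_c part_index rows (sg c) = \sum_r part_index rows r.
  by rewrite [RHS](reindex_inj sg_inj).
rewrite !sum_part_index // -size_rows_cols.
by apply: eq_bigr => i _; rewrite card_rows_cols.
Qed.

End BlockTriangular.

Lemma next_last (T : eqType) (x : T) s : uniq (x :: s) -> next (x :: s) (last x s) = x.
Proof. by move=> xs_uniq; rewrite next_nth mem_last index_last //= nth_default. Qed.

Lemma next_notin (T : eqType) (p : seq T) x : x \notin p -> next p x = x.
Proof. by move=> px; rewrite next_nth (negbTE px). Qed.

Lemma next_disjoint_inj (T : finType) (p q : seq T) :
  uniq p -> uniq q -> [disjoint p & q] ->
  injective (fun x => if x \in p then next p x else next q x).
Proof.
move=> p_uniq q_uniq pq x y.
have next_q_notin_p z : z \notin p -> next q z \notin p.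
  move=> zp; have [zq|zq] := boolP (z \in q); last by rewrite next_notin.
  by rewrite (disjointFl pq) // mem_next.
case: ifP => xp; case: ifP => yp.
- exact: (can_inj (prev_next p_uniq)).
- by move=> nxy; have := next_q_notin_p _ (negbT yp); rewrite -nxy mem_next xp.
- by move=> nxy; have := next_q_notin_p _ (negbT xp); rewrite nxy mem_next yp.
- exact: (can_inj (prev_next q_uniq)).
Qed.

Lemma uniq_path_of_connect (T : finType) (r : rel T) x y : connect r x y ->
  exists p, [/\ path r x p, uniq (x :: p) & last x p = y].
Proof. by case/connectP=> p /shortenP[p' ? ? _] ->; exists p'. Qed.

Section SubRel.
Variables (T : finType) (e : rel T).

Lemma sub_rel_path_all (Z : {set T}) x p : path (sub_rel e Z) x p -> all (mem Z) p.
Proof. by elim: p x => //= y p IHp x /andP[/and3P[_ _ ->] /IHp]. Qed.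

Lemma connect_sub_rel_subset (Z Z' : {set T}) a b : Z \subset Z' ->
  connect (sub_rel e Z) a b -> connect (sub_rel e Z') a b.
Proof.
move=> /subsetP ZZ'; apply: connect_sub => x y /and3P[xy xZ yZ].
by apply: connect1; rewrite /sub_rel /= xy !ZZ'.
Qed.

Lemma connect_sub_rel_upclosed (Z : {set T}) a b :
  (forall x y, connect e x y -> y \in Z -> x \in Z) ->
  b \in Z -> connect e a b -> connect (sub_rel e Z) a b.
Proof.
move=> Z_up bZ /connectP[p ab_path b_last]; rewrite {}b_last in bZ *.
elim: p a ab_path bZ => [|c p IHp] a /=; first by rewrite connect0.
case/andP=> ac cb_path bZ; apply: connect_trans (IHp c cb_path bZ).
have cZ : c \in Z := Z_up _ _ (path_connect cb_path (mem_last c p)) bZ.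
by apply: connect1; rewrite /sub_rel /= ac cZ (Z_up _ _ (connect1 ac) cZ).
Qed.

End SubRel.

Section Network.
Variables (T : finType) (e : rel T) (n : nat) (iota : 'I_n -> T) (o : T).
Local Notation hH := (hH e iota o).
Local Notation simple_path := (simple_path e iota o).

Lemma is_self_entry_hH r c : is_self_entry (hH r c) = (c != o) && (r == c).
Proof.
rewrite /hH; have [->|_] /= := eqVneq c o; first by case: pickP.
have [->|rc] /= := eqVneq r c; first by rewrite eqxx.
by case: (e c r); rewrite /= ?(negbTE rc).
Qed.

Lemma nonzero_hH r c : c != o -> nonzero (hH r c) = (r == c) || e c r.
Proof. by move=> co; rewrite /hH (negbTE co); case: ifP. Qed.

Lemma nonzero_hH_input m : nonzero (hH (iota m) o).
Proof. by rewrite /hH eqxx; case: pickP => // /(_ m); rewrite eqxx. Qed.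

Lemma simple_path_next_entry m s c : simple_path m s -> c \in iota m :: s ->
  nonzero (hH (next (iota m :: s) c) c).
Proof.
case/and3P=> s_path /eqP s_last s_uniq cp.
have [->|co] := eqVneq c o.
  by rewrite -[X in next _ X]s_last next_last // nonzero_hH_input.
pose e' := [rel a b | e a b || (a == o) && (b == iota m)].
have cycle_e' : cycle e' (iota m :: s).
  rewrite /= rcons_path s_last /= !eqxx orbT andbT.
  by apply: sub_path s_path => a b /= ->.
have := next_cycle cycle_e' cp; rewrite /= (negbTE co) orbF => c_next.
by rewrite nonzero_hH // c_next orbT.
Qed.

Lemma appendage_block_diag R C : appendage_block e iota o R C -> #|R| = #|C| ->
  R = C /\ o \notin R.
Proof.
case=> _ card_self card_RC.
have self_diag : [set p : T * T | [&& p.1 \in R, p.2 \in C & is_self_entry (hH p.1 p.2)]]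
    = [set (r, r) | r in (R :&: C) :\ o].
  apply/setP => [[r c]]; rewrite !inE /= is_self_entry_hH; apply/idP/imsetP.
  - by case/and4P=> rR cC co /eqP rc; subst c; exists r; rewrite // !inE rR cC co.
  - by case=> x; rewrite !inE => /and3P[xo xR xC] [-> ->]; rewrite xR xC xo eqxx.
move: card_self; rewrite self_diag card_imset; last by move=> x y [].
move=> card_RCo; have RCo : (R :&: C) :\ o = R.
  by apply/eqP; rewrite eqEcard card_RCo leqnn andbT subDset subsetU ?subsetIl ?orbT.
split; last by rewrite -RCo !inE eqxx.
apply/eqP; rewrite eqEcard card_RC leqnn andbT -RCo.
by apply: subset_trans (subsetDl _ _) (subsetIr _ _).
Qed.

Lemma fully_indecomposable_connect K : fully_indecomposable e iota o K K -> o \notin K ->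
  {in K &, forall a b, connect (sub_rel e K) a b}.
Proof.
case=> _ _ _ no_zero_block oK a b aK bK.
set U := [set v in K | connect (sub_rel e K) a v].
suff : K \subset U by move/subsetP/(_ b bK); rewrite inE => /andP[].
apply: contraT => KU.
have UK : U \subset K by apply/subsetP => v; rewrite inE => /andP[].
have U_pos : 0 < #|U| by apply/card_gt0P; exists a; rewrite inE aK connect0.
have KU_pos : 0 < #|K :\: U| by rewrite card_gt0 setD_eq0.
have card_K : #|K :\: U| + #|U| = #|K|.
  by rewrite -(cardsID U K) (setIidPr UK) addnC.
have KU_proper : 0 < #|K :\: U| < #|K| by rewrite KU_pos -card_K /=; lia.
have [r [c [rKU cU rc_nz]]] := no_zero_block _ _ (subsetDl K U) UK KU_proper card_K.
have cK : c \in K := subsetP UK c cU.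
move: rKU; rewrite inE => /andP[rU rK].
have co : c != o by apply: contraNneq oK => <-.
have rc : r != c by apply: contraNneq rU => ->.
move: rc_nz; rewrite nonzero_hH // (negbTE rc) /= => cr.
apply: contraNT rU => _; move: cU; rewrite !inE rK => /andP[_ ac].
by apply: connect_trans ac (connect1 _); rewrite /sub_rel /= cr cK.
Qed.

Section FrobeniusKoenig.
Variable bs : seq ({set T} * {set T}).
Hypothesis FK : FK_decomposition e iota o bs.
Local Notation rows := [seq b.1 | b <- bs].
Local Notation cols := [seq b.2 | b <- bs].

Lemma FK_rows_partition x : count (fun A : {set T} => x \in A) rows = 1.
Proof. by case: FK => rows_part _ _ _; rewrite count_map; apply: rows_part. Qed.

Lemma FK_cols_partition x : count (fun A : {set T} => x \in A) cols = 1.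
Proof. by case: FK => _ cols_part _ _; rewrite count_map; apply: cols_part. Qed.

Lemma FK_upper r c : nonzero (hH r c) -> part_index rows r <= part_index cols c.
Proof.
case: FK => _ _ _ lower_zero; apply: contraTT; rewrite -ltnNge => lt_cr.
have r_lt := part_index_lt FK_rows_partition r; rewrite size_map in r_lt.
have c_lt := part_index_lt FK_cols_partition c; rewrite size_map in c_lt.
have := mem_part_index FK_rows_partition r; rewrite (nth_map (set0, set0)) // => rr.
have := mem_part_index FK_cols_partition c; rewrite (nth_map (set0, set0)) // => cc.
by rewrite (lower_zero _ _ _ r c rr cc) // lt_cr r_lt.
Qed.

Lemma FK_transversal (sg : T -> T) : injective sg -> (forall c, nonzero (hH (sg c) c)) ->
  forall c, part_index rows (sg c) = part_index cols c.
Proof.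
case: FK => _ _ blocks _ sg_inj sg_nz.
apply: transversal_part_index sg_inj sg_nz => //.
- exact: FK_rows_partition.
- exact: FK_cols_partition.
- by rewrite !size_map.
- move=> i; rewrite size_map => i_lt; rewrite !(nth_map (set0, set0)) //.
  by case: (blocks _ (mem_nth (set0, set0) i_lt)).
- exact: FK_upper.
Qed.

End FrobeniusKoenig.

Hypothesis core : core_network e iota o.

Lemma exists_simple_path m : exists s, simple_path m s.
Proof.
have [/uniq_path_of_connect[s [s_path s_uniq s_last]] _] := core (iota m).
by exists s; rewrite /Defs.simple_path s_path s_last eqxx.
Qed.

Lemma not_simple_reaches_back m u y : path e (iota m) u -> uniq (iota m :: u) ->
    last (iota m) u = y -> ~ simple_node e iota o m y ->
  exists2 z, z \in belast (iota m) u & connect e y z.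
Proof.
move=> u_path u_uniq u_last y_not_simple.
have [/hasP[z z_back yz] | no_back] := boolP (has (connect e y) (belast (iota m) u)).
  by exists z.
case: y_not_simple; have [/uniq_path_of_connect[w [w_path yw_uniq w_last]] _] := core y.
exists (u ++ w); split; last by rewrite /on_path -cat_cons mem_cat -u_last mem_last.
rewrite /Defs.simple_path cat_path u_path u_last w_path last_cat u_last w_last eqxx.
rewrite !andTb -cat_cons cat_uniq u_uniq.
move: yw_uniq => /= /andP[yw w_uniq]; rewrite w_uniq andbT.
apply/hasPn => v vw; rewrite lastI u_last mem_rcons inE negb_or.
rewrite (memPn yw) //=; apply: contra no_back => v_back; apply/hasP; exists v => //.
by apply: (path_connect w_path); rewrite inE vw orbT.
Qed.

Section AppendageBlock.
Variables (bs : seq ({set T} * {set T})) (B : {set T} * {set T}).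
Hypotheses (FK : FK_decomposition e iota o bs) (B_in : B \in bs)
           (B_app : appendage_block e iota o B.1 B.2).
Local Notation K := B.1.

Lemma appendage_blockE : B.2 = K /\ o \notin K.
Proof.
have [_ _ blocks _] := FK; have [card_B _ _ _] := blocks _ B_in.
by have [-> oK] := appendage_block_diag B_app card_B.
Qed.

Lemma K_transversal_closed (sg : T -> T) : injective sg ->
  (forall c, nonzero (hH (sg c) c)) -> forall c, (sg c \in K) = (c \in K).
Proof.
move=> sg_inj sg_nz c.
rewrite -(part_index_map _ B_in (FK_rows_partition FK)) -[in RHS](proj1 appendage_blockE).
by rewrite -(part_index_map _ B_in (FK_cols_partition FK)) (FK_transversal FK sg_inj sg_nz).
Qed.

Lemma K_next_closed m s q : simple_path m s -> cycle e q -> uniq q ->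
    [disjoint iota m :: s & q] ->
  (forall x, (next (iota m :: s) x \in K) = (x \in K)) /\
  (forall x, (next q x \in K) = (x \in K)).
Proof.
move=> sp q_cycle q_uniq pq; set p := iota m :: s.
have [_ /eqP s_last p_uniq] := and3P sp.
have o_p : o \in p by rewrite -s_last mem_last.
pose sg x := if x \in p then next p x else next q x.
have sg_nz c : nonzero (hH (sg c) c).
  rewrite /sg; case: ifP => [cp | /negbT cp]; first exact: simple_path_next_entry.
  have co : c != o by apply: contraNneq cp => ->.
  rewrite nonzero_hH //; have [cq|cq] := boolP (c \in q).
    by rewrite next_cycle ?orbT.
  by rewrite next_notin ?eqxx.
have sgK := K_transversal_closed (next_disjoint_inj p_uniq q_uniq pq) sg_nz.
split=> x; have [xp|xp] := boolP (x \in p).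
- by have := sgK x; rewrite /sg xp.
- by rewrite next_notin.
- by rewrite next_notin // (disjointFr pq xp).
- by have := sgK x; rewrite /sg (negbTE xp).
Qed.

Lemma simple_path_notin_K m s x : simple_path m s -> x \in iota m :: s -> x \notin K.
Proof.
move=> sp xp; set p := iota m :: s.
have [_ /eqP s_last p_uniq] := and3P sp.
have nil_disjoint : [disjoint p & [::] : seq T] by rewrite disjoint_has has_pred0.
have [p_closed _] := K_next_closed sp (erefl : cycle e [::]) (erefl : uniq [::]) nil_disjoint.
have K_closed : closed (frel (next p)) (mem K) by move=> a b /eqP <-; rewrite p_closed.
have o_p : o \in p by rewrite -s_last mem_last.
have o_x : fconnect (next p) o x by rewrite (fconnect_cycle (cycle_next p_uniq)).
by rewrite -(closed_connect K_closed o_x) (proj2 appendage_blockE).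
Qed.

Lemma K_not_simple m x : x \in K -> ~ simple_node e iota o m x.
Proof. by move=> xK [s [sp xp]]; move: xK; apply/negP; apply: simple_path_notin_K sp xp. Qed.

Lemma K_edge_closed m s (Z : {set T}) a b : simple_path m s -> [disjoint Z & iota m :: s] ->
  e a b -> a \in Z -> connect (sub_rel e Z) b a -> (a \in K) = (b \in K).
Proof.
move=> sp Zp ab aZ /uniq_path_of_connect[p [ba_path q_uniq ba_last]].
have bZ : b \in Z.
  by case: p {q_uniq} ba_path ba_last => [_ /= -> // | y p /andP[/and3P[]]].
have qZ : {subset b :: p <= Z}.
  by apply/allP; rewrite /= bZ (sub_rel_path_all ba_path).
have q_cycle : cycle e (b :: p).
  rewrite /= rcons_path ba_last ab andbT.
  by apply: sub_path ba_path => x y /and3P[].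
have pq : [disjoint iota m :: s & b :: p].
  by rewrite disjoint_sym; apply: disjointWl Zp; apply/subsetP.
have [_ q_closed] := K_next_closed sp q_cycle q_uniq pq.
by rewrite -(q_closed a) -[X in next _ X]ba_last next_last.
Qed.

Lemma K_path_equiv_closed m s (Z : {set T}) x y : simple_path m s ->
    [disjoint Z & iota m :: s] ->
  connect (sub_rel e Z) x y -> connect (sub_rel e Z) y x -> (x \in K) = (y \in K).
Proof.
move=> sp Zp /connectP[w xy_path ->].
elim: w x xy_path => //= z w IHw x /andP[/and3P[xz xZ zZ] zy_path] yx.
have zx : connect (sub_rel e Z) z x.
  by apply: connect_trans yx; apply/connectP; exists w.
rewrite (K_edge_closed sp Zp xz xZ zx); apply: IHw zy_path _.
by apply: connect_trans yx (connect1 _); rewrite /sub_rel /= xz xZ zZ.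
Qed.

Lemma K_upclosed_descent m s (Z : {set T}) m' u y : simple_path m s ->
    [disjoint Z & iota m :: s] -> (forall a b, connect e a b -> b \in Z -> a \in Z) ->
    path e (iota m') u -> uniq (iota m' :: u) -> last (iota m') u = y ->
    y \in K -> y \in Z ->
  exists u1, [/\ size u1 < size u, path e (iota m') u1, uniq (iota m' :: u1),
                 last (iota m') u1 \in K & last (iota m') u1 \in Z].
Proof.
move=> sp Zp Z_up u_path u_uniq u_last yK yZ.
have [z z_back yz] := not_simple_reaches_back u_path u_uniq u_last (K_not_simple yK).
have zy_neq : z != y.
  by apply: contraTneq z_back => ->; move: u_uniq; rewrite lastI u_last rcons_uniq => /andP[].
move/mem_belast: z_back => /splitPl[u1 u2 u1_last] in u_path u_uniq u_last *.
move: u_path; rewrite cat_path u1_last => /andP[u1_path u2_path].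
move: u_uniq; rewrite -cat_cons cat_uniq => /andP[u1_uniq _].
rewrite last_cat u1_last in u_last.
have zy : connect e z y by apply: (path_connect u2_path); rewrite -u_last mem_last.
have zZ : z \in Z := Z_up _ _ zy yZ.
exists u1; split; rewrite ?u1_last //.
  case: u2 {u2_path} u_last => [/= zy_eq | v u2 _]; first by rewrite zy_eq eqxx in zy_neq.
  by rewrite size_cat /= addnS ltnS leq_addr.
by rewrite (K_path_equiv_closed sp Zp (connect_sub_rel_upclosed Z_up yZ zy)
                                      (connect_sub_rel_upclosed Z_up zZ yz)).
Qed.

Lemma K_disjoint_upclosed m s (Z : {set T}) x : simple_path m s ->
    [disjoint Z & iota m :: s] -> (forall a b, connect e a b -> b \in Z -> a \in Z) ->
  x \in K -> x \notin Z.
Proof.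
move=> sp Zp Z_up xK; apply/negP => xZ.
have [_ [m' /uniq_path_of_connect[u [u_path u_uniq u_last]]]] := core x.
have [k] := ubnP (size u); elim: k u x u_path u_uniq u_last xK xZ => // k IHk u y.
move=> u_path u_uniq u_last yK yZ u_size.
have [u1 [u1_size u1_path u1_uniq zK zZ]] :=
  K_upclosed_descent sp Zp Z_up u_path u_uniq u_last yK yZ.
exact: IHk u1 _ u1_path u1_uniq erefl zK zZ (leq_trans u1_size u_size).
Qed.

Lemma K_downstream m x : x \in K -> downstream e (iota m) x.
Proof.
move=> xK; have [s sp] := exists_simple_path m.
set Z := [set v | ~~ connect e (iota m) v].
have Zp : [disjoint Z & iota m :: s].
  rewrite disjoint_subset; apply/subsetP => v; rewrite !inE; apply: contra => vp.
  by case/and3P: sp => s_path _ _; apply: path_connect s_path _ vp.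
have Z_up a b : connect e a b -> b \in Z -> a \in Z.
  by rewrite !inE => ab; apply: contra => /connect_trans; apply.
by have := K_disjoint_upclosed sp Zp Z_up xK; rewrite inE negbK.
Qed.

Lemma K_absolutely_appendage x : x \in K -> absolutely_appendage e iota o x.
Proof. by move=> xK m; split; [apply: K_downstream | apply: K_not_simple]. Qed.

Lemma K_path_component : path_component e (AG e iota o) K.
Proof.
have [B2K oK] := appendage_blockE; have [_ _ blocks _] := FK.
have := blocks _ B_in; rewrite B2K => K_indec; have [_ K_pos _ _] := K_indec.
have K_connect := fully_indecomposable_connect K_indec oK.
have [a aK] : exists a, a \in K by apply/card_gt0P.
have K_AG : K \subset AG e iota o.
  by apply/subsetP => v vK; rewrite inE; apply/asboolP; apply: K_absolutely_appendage.
exists a; first exact: subsetP K_AG a aK.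
apply/setP => b; rewrite inE; apply/idP/asboolP => [bK | [_ bA ab ba]].
  by split; rewrite ?(subsetP K_AG) //; apply: connect_sub_rel_subset K_AG _; apply: K_connect.
have [m _] := (core a).2; have [s sp] := exists_simple_path m.
have AGp : [disjoint AG e iota o & iota m :: s].
  rewrite disjoint_subset; apply/subsetP => v; rewrite !inE => /asboolP /(_ m) [_ v_ns].
  by apply/negP => vp; apply: v_ns; exists s.
by rewrite -(K_path_equiv_closed sp AGp ab ba).
Qed.

End AppendageBlock.

End Network.

Theorem theorem3p13 (T : finType) (e : rel T) (n : nat) (iota : 'I_n -> T)
    (o : T)
    (iota_inj : injective iota) (iota_neq_o : forall m, iota m != o)
    (core : core_network e iota o)
    (bs : seq ({set T} * {set T})) (FK : FK_decomposition e iota o bs)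
    (B : {set T} * {set T}) (B_in : B \in bs)
    (B_app : appendage_block e iota o B.1 B.2) :
  let K := assoc_subnetwork B in
  [/\ (* (a) *)
      forall x, x \in K -> absolutely_appendage e iota o x,
      (* (b) *)
      forall (m : 'I_n) (s : seq T), simple_path e iota o m s ->
        forall x y, x \in K -> y \in CS iota m s -> y \notin K ->
          ~ path_equiv e (CS iota m s) x y
    & (* (c) *)
      path_component e (AG e iota o) K].
Proof.
move=> K; split.
- by move=> x xK; apply: (K_absolutely_appendage core FK B_in B_app xK).
- move=> m s sp x y xK _ yK [_ _ xy yx].
  have CSp : [disjoint CS iota m s & iota m :: s].
    by rewrite disjoint_subset; apply/subsetP => v; rewrite !inE.
  by move: yK; rewrite -(K_path_equiv_closed FK B_in B_app sp CSp xy yx) xK.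
- exact: (K_path_component core FK B_in B_app).
Qed.
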